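(* Let $R$ be a Noetherian ring and $\{F_\lambda\}_{\lambda\in\Lambda}$ a direct system (over a directed set $\Lambda$) of $R$-linear covariant functors from finitely generated $R$-modules to finitely generated $R$-modules. Let $F=\varinjlim_\lambda F_\lambda$ (computed objectwise, $F(N)=\varinjlim_\lambda F_\lambda(N)$), with canonical natural transformations $T_\lambda\colon F_\lambda\to F$. If $F$ takes values in finitely generated $R$-modules and is finitely generated, then $F=\operatorname{im}T_{\lambda_0}$ for some $\lambda_0\in\Lambda$. In particular, if every $T_\lambda$ is injective, then $T_\lambda\colon F_\lambda\to F$ is an isomorphism for all $\lambda\ge\lambda_0$.
   Context: For an $R$-module $X$, $h_X=\operatorname{Hom}_R(X,-)$. An $R$-linear functor $F$ from finitely generated $R$-modules to themselves is finitely generated if there is a finitely generated $R$-module $M$ and a surjective natural transformation $h_M\to F$. *)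

From HB Require Import structures.
From mathcomp Require Import all_boot all_order all_algebra.
Set Implicit Arguments. Unset Strict Implicit. Unset Printing Implicit Defensive.
Import GRing.Theory.
Local Open Scope ring_scope.

Definition is_ideal (R : comPzRingType) (I : R -> Prop) : Prop :=
  [/\ I 0, (forall x y, I x -> I y -> I (x + y)) & (forall a x, I x -> I (a * x))].

Definition ideal_fg (R : comPzRingType) (I : R -> Prop) : Prop :=
  exists s : seq R, (forall x, x \in s -> I x) /\
    (forall x, I x -> exists c : 'I_(size s) -> R, x = \sum_(i < size s) c i * s`_i).

Definition noetherian (R : comPzRingType) : Prop :=
  forall I : R -> Prop, is_ideal I -> ideal_fg I.

Definition fin_gen_mod (R : comPzRingType) (M : lmodType R) : Prop :=
  exists s : seq M,
    forall x : M, exists c : 'I_(size s) -> R, x = \sum_(i < size s) c i *: s`_i.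

Record fgmod (R : comPzRingType) := FGMod {
  fgcar :> lmodType R;
  fgcarP : fin_gen_mod fgcar }.

Record rfunctor (R : comPzRingType) := RFunctor {
  fobj : fgmod R -> fgmod R;
  fmap : forall M N : fgmod R, {linear M -> N} -> {linear fobj M -> fobj N};
  fmap_id : forall (M : fgmod R) (f : {linear M -> M}),
      (forall x, f x = x) -> forall y, fmap f y = y;
  fmap_comp : forall (M N P : fgmod R) (f : {linear M -> N}) (g : {linear N -> P})
      (h : {linear M -> P}), (forall x, h x = g (f x)) ->
      forall y, fmap h y = fmap g (fmap f y);
  fmap_lin : forall (M N : fgmod R) (a : R) (f g h : {linear M -> N}),
      (forall x, h x = a *: f x + g x) ->
      forall y, fmap h y = a *: fmap f y + fmap g y }.

Arguments fmap {R} r {M N} _.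
Record natTrans (R : comPzRingType) (F G : rfunctor R) := NatTrans {
  ntc : forall M : fgmod R, fobj F M -> fobj G M;
  ntc_lin : forall M : fgmod R, linear (@ntc M);
  ntc_nat : forall (M N : fgmod R) (f : {linear M -> N}) (x : fobj F M),
      @ntc N (fmap F f x) = fmap G f (@ntc M x) }.

Arguments ntc {R F G} _ M _.

(* a natural transformation h_M = Hom_R(M,-) -> F, described by its
   components Hom_R(M,N) -> F(N) *)
Definition hom_nat (R : comPzRingType) (M : fgmod R) (F : rfunctor R)
    (eta : forall N : fgmod R, {linear M -> N} -> fobj F N) : Prop :=
  (forall (N : fgmod R) (a : R) (f g h : {linear M -> N}),
      (forall x, h x = a *: f x + g x) -> eta N h = a *: eta N f + eta N g) /\
  (forall (N N' : fgmod R) (g : {linear N -> N'}) (f : {linear M -> N})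
      (h : {linear M -> N'}), (forall x, h x = g (f x)) ->
      eta N' h = fmap F g (eta N f)).

Definition fg_functor (R : comPzRingType) (F : rfunctor R) : Prop :=
  exists (M : fgmod R) (eta : forall N : fgmod R, {linear M -> N} -> fobj F N),
    hom_nat eta /\ forall (N : fgmod R) (y : fobj F N), exists f, eta N f = y.

Definition directed (L : Type) (le : L -> L -> Prop) : Prop :=
  [/\ inhabited L, (forall i, le i i),
      (forall i j k, le i j -> le j k -> le i k)
    & (forall i j, exists k, le i k /\ le j k)].

Definition direct_system (R : comPzRingType) (L : Type) (le : L -> L -> Prop)
    (Fs : L -> rfunctor R) (phi : forall i j, le i j -> natTrans (Fs i) (Fs j)) : Prop :=
  (forall i (h : le i i) N x, ntc (phi i i h) N x = x) /\
  (forall i j k (hij : le i j) (hjk : le j k) (hik : le i k) N x,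
      ntc (phi i k hik) N x = ntc (phi j k hjk) N (ntc (phi i j hij) N x)).

(* (F, T) is the objectwise colimit of the direct system: T is a compatible
   cocone and, for each N, (F N, T_i N) is a colimit in R-modules. *)
Definition is_colimit (R : comPzRingType) (L : Type) (le : L -> L -> Prop)
    (Fs : L -> rfunctor R) (phi : forall i j, le i j -> natTrans (Fs i) (Fs j))
    (F : rfunctor R) (T : forall i, natTrans (Fs i) F) : Prop :=
  (forall i j (h : le i j) N x, ntc (T j) N (ntc (phi i j h) N x) = ntc (T i) N x) /\
  (forall (N : fgmod R) (X : lmodType R) (g : forall i, fobj (Fs i) N -> X),
      (forall i, linear (g i)) ->
      (forall i j (h : le i j) x, g j (ntc (phi i j h) N x) = g i x) ->
      exists! u : fobj F N -> X, linear u /\ forall i x, u (ntc (T i) N x) = g i x).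

From HB Require Import structures.
From mathcomp Require Import all_boot all_order all_algebra.
From mathcomp Require Import boolp.
Set Implicit Arguments. Unset Strict Implicit. Unset Printing Implicit Defensive.
Import GRing.Theory.
Local Open Scope ring_scope.
Local Open Scope quotient_scope.

(* Since F is a colimit of the F_l, the element u0 = eta_M(id_M) of F(M)
   coming from a surjection eta : h_M -> F lies in the image of a single
   T_l0. By Yoneda every y in F(N) is eta_N(f) = F(f)(u0) for some f : M -> N,
   and naturality of T_l0 then puts y in the image of T_l0 too. *)

Section LinearFunctions.

Variables (R : pzRingType) (U V : lmodType R) (f : U -> V).
Hypothesis f_linear : linear f.

Lemma linear_add x y : f (x + y) = f x + f y.
Proof. by have := f_linear 1 x y; rewrite !scale1r. Qed.

Lemma linear_zero : f 0 = 0.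
Proof. by apply: (addrI (f 0)); rewrite -linear_add !addr0. Qed.

Lemma linear_scale a x : f (a *: x) = a *: f x.
Proof. by rewrite -[a *: x]addr0 f_linear linear_zero addr0. Qed.

End LinearFunctions.

Section QuotientModule.

Variables (R : pzRingType) (V : lmodType R) (P : V -> Prop).

Definition is_submodule :=
  [/\ P 0, (forall x y, P x -> P y -> P (x + y)) & (forall a x, P x -> P (a *: x))].

Hypothesis P_submodule : is_submodule.

Definition submod_rel : rel V := fun x y => `[< P (x - y) >].

Lemma submod_rel_equiv : equiv_class_of submod_rel.
Proof.
case: P_submodule => P0 PD PZ; split.
- by move=> x; apply/asboolP; rewrite subrr.
- move=> x y; apply/asboolP/asboolP => /(PZ (-1)); by rewrite scaleN1r opprB.
- move=> y x z /asboolP Pxy /asboolP Pyz; apply/asboolP.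
  by have := PD _ _ Pxy Pyz; rewrite addrA subrK.
Qed.

Definition quotmod : Type := {eq_quot EquivRelPack submod_rel_equiv}.

HB.instance Definition _ := Choice.on quotmod.

Lemma quotmod_eqP x y : \pi_quotmod x = \pi_quotmod y <-> P (x - y).
Proof. by split => [/eqmodP/asboolP | Pxy]; last apply/eqmodP/asboolP. Qed.

Lemma repr_pi_diff x : P (repr (\pi_quotmod x) - x).
Proof. by apply/quotmod_eqP; rewrite reprK. Qed.

Lemma quotmodW (Q : quotmod -> Prop) : (forall x, Q (\pi_quotmod x)) -> forall a, Q a.
Proof. by move=> Qpi a; rewrite -(reprK a). Qed.

Definition quotmod_add (a b : quotmod) : quotmod := \pi_quotmod (repr a + repr b).
Definition quotmod_opp (a : quotmod) : quotmod := \pi_quotmod (- repr a).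
Definition quotmod_scale r (a : quotmod) : quotmod := \pi_quotmod (r *: repr a).

Lemma quotmod_addE x y :
  quotmod_add (\pi_quotmod x) (\pi_quotmod y) = \pi_quotmod (x + y).
Proof.
have [_ PD _] := P_submodule; apply/quotmod_eqP.
by rewrite opprD addrACA; apply: PD; apply: repr_pi_diff.
Qed.

Lemma quotmod_oppE x : quotmod_opp (\pi_quotmod x) = \pi_quotmod (- x).
Proof.
have [_ _ PZ] := P_submodule; apply/quotmod_eqP.
by have := PZ (-1) _ (repr_pi_diff x); rewrite scaleN1r opprB addrC opprK.
Qed.

Lemma quotmod_scaleE r x : quotmod_scale r (\pi_quotmod x) = \pi_quotmod (r *: x).
Proof.
have [_ _ PZ] := P_submodule; apply/quotmod_eqP.
by rewrite -scalerBr; apply: PZ; apply: repr_pi_diff.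
Qed.

Lemma quotmod_addA : associative quotmod_add.
Proof.
move=> a b c; elim/quotmodW: a => x; elim/quotmodW: b => y; elim/quotmodW: c => z.
by rewrite !quotmod_addE addrA.
Qed.

Lemma quotmod_addC : commutative quotmod_add.
Proof.
by move=> a b; elim/quotmodW: a => x; elim/quotmodW: b => y; rewrite !quotmod_addE addrC.
Qed.

Lemma quotmod_add0 : left_id (\pi_quotmod 0) quotmod_add.
Proof. by move=> a; elim/quotmodW: a => x; rewrite quotmod_addE add0r. Qed.

Lemma quotmod_addN : left_inverse (\pi_quotmod 0) quotmod_opp quotmod_add.
Proof. by move=> a; elim/quotmodW: a => x; rewrite quotmod_oppE quotmod_addE addNr. Qed.

HB.instance Definition _ :=
  GRing.isZmodule.Build quotmod quotmod_addA quotmod_addC quotmod_add0 quotmod_addN.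

Lemma quotmod_plusE (a b : quotmod) : a + b = quotmod_add a b.
Proof. by []. Qed.

Lemma quotmod_scaleA a b v : quotmod_scale a (quotmod_scale b v) = quotmod_scale (a * b) v.
Proof. by elim/quotmodW: v => x; rewrite !quotmod_scaleE scalerA. Qed.

Lemma quotmod_scale1 : left_id 1 quotmod_scale.
Proof. by move=> v; elim/quotmodW: v => x; rewrite quotmod_scaleE scale1r. Qed.

Lemma quotmod_scaleDr : right_distributive quotmod_scale +%R.
Proof.
move=> a u v; elim/quotmodW: u => x; elim/quotmodW: v => y.
by rewrite !quotmod_plusE quotmod_addE !quotmod_scaleE quotmod_addE scalerDr.
Qed.

Lemma quotmod_scaleDl (v : quotmod) : {morph quotmod_scale^~ v : a b / a + b}.
Proof.
elim/quotmodW: v => x a b.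
by rewrite !quotmod_plusE !quotmod_scaleE quotmod_addE scalerDl.
Qed.

HB.instance Definition _ := GRing.Zmodule_isLmodule.Build R quotmod
  quotmod_scaleA quotmod_scale1 quotmod_scaleDr quotmod_scaleDl.

Lemma pi_quotmod_linear : linear (\pi_quotmod : V -> quotmod).
Proof. by move=> a x y; rewrite /= -quotmod_addE -quotmod_scaleE. Qed.

Lemma pi_quotmod_eq0 x : \pi_quotmod x = 0 :> quotmod <-> P x.
Proof. by have := quotmod_eqP x 0; rewrite subr0. Qed.

End QuotientModule.

Lemma inj_surj_bijective (A B : Type) (f : A -> B) :
  injective f -> (forall y, exists x, f x = y) -> bijective f.
Proof.
move=> f_inj f_surj; pose g y := proj1_sig (cid (f_surj y)).
have gK : cancel g f by move=> y; rewrite /g; case: cid.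
by exists g => // x; apply: f_inj; rewrite gK.
Qed.

Section DirectedCover.

Variables (R : pzRingType) (L : Type) (le : L -> L -> Prop).
Variables (A : L -> lmodType R) (C : lmodType R) (t : forall i, A i -> C).
Arguments t : clear implicits.

Hypothesis le_directed : directed le.
Hypothesis t_linear : forall i, linear (t i).
Hypothesis t_image_nested : forall i j, le i j -> forall x, exists y, t j y = t i x.
Hypothesis t_jointly_epi : forall (X : lmodType R) (u v : C -> X),
  linear u -> linear v -> (forall i x, u (t i x) = v (t i x)) -> u =1 v.

Definition directed_image (y : C) := exists i x, t i x = y.

Lemma directed_image_submodule : is_submodule directed_image.
Proof.
have [[i0] _ _ le_ub] := le_directed; split.
- by exists i0, 0; apply: linear_zero.
- move=> _ _ [i [a <-]] [j [b <-]]; have [k [le_ik le_jk]] := le_ub i j.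
  have [[a' <-] [b' <-]] := (t_image_nested le_ik a, t_image_nested le_jk b).
  by exists k, (a' + b'); apply: linear_add.
- by move=> c _ [i [a <-]]; exists i, (c *: a); apply: linear_scale.
Qed.

(* The projection onto C / (union of the images) and the zero map agree on
   every image, hence coincide. *)
Lemma directed_image_cover y : directed_image y.
Proof.
pose Q := quotmod directed_image_submodule.
have zero_linear : linear (fun _ : C => 0 : Q).
  by move=> a x z; rewrite scaler0 addr0.
apply/(pi_quotmod_eq0 directed_image_submodule).
apply: (t_jointly_epi (pi_quotmod_linear _) zero_linear) => i x.
by apply/pi_quotmod_eq0; exists i, x.
Qed.

End DirectedCover.

Definition natTrans_onto (R : comPzRingType) (G H : rfunctor R) (S : natTrans G H) :=
  forall (N : fgmod R) (y : fobj H N), exists x, ntc S N x = y.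

Section ColimitOfFunctors.

Variables (R : comPzRingType) (L : Type) (le : L -> L -> Prop).
Variables (Fs : L -> rfunctor R) (phi : forall i j, le i j -> natTrans (Fs i) (Fs j)).
Variables (F : rfunctor R) (T : forall i, natTrans (Fs i) F).

Hypothesis T_colimit : is_colimit phi T.

Lemma colimit_image_nested i j : le i j ->
  forall N x, exists y, ntc (T j) N y = ntc (T i) N x.
Proof. by move=> le_ij N x; exists (ntc (phi le_ij) N x); apply: (proj1 T_colimit). Qed.

Lemma colimit_jointly_epi (N : fgmod R) (X : lmodType R) (u v : fobj F N -> X) :
  linear u -> linear v -> (forall i x, u (ntc (T i) N x) = v (ntc (T i) N x)) ->
  u =1 v.
Proof.
move=> u_linear v_linear uv_eq.
have comp_linear (w : fobj F N -> X) i : linear w -> linear (w \o ntc (T i) N).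
  by move=> w_linear a x y; rewrite /= (ntc_lin (T i)) w_linear.
have [w [_ w_unique]] := T_colimit.2 N X (fun i => u \o ntc (T i) N)
  (fun i => comp_linear u i u_linear)
  (fun i j le_ij x => congr1 u (proj1 T_colimit i j le_ij N x)).
have <- := w_unique u (conj u_linear (fun i x => erefl)).
by have <- := w_unique v (conj v_linear (fun i x => esym (uv_eq i x))).
Qed.

Lemma colimit_cover : directed le ->
  forall (N : fgmod R) (y : fobj F N), exists i x, ntc (T i) N x = y.
Proof.
move=> le_directed N; apply: (directed_image_cover le_directed).
- by move=> i; apply: ntc_lin.
- by move=> i j le_ij; apply: colimit_image_nested.
- by move=> X u v; apply: colimit_jointly_epi.
Qed.

Lemma colimit_onto_up l0 l : le l0 l -> natTrans_onto (T l0) -> natTrans_onto (T l).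
Proof.
move=> le_l0l T_l0_onto N y; have [x <-] := T_l0_onto N y.
exact: colimit_image_nested.
Qed.

End ColimitOfFunctors.

(* Yoneda: y = eta_N(f) = F(f)(eta_M(id)) = F(f)(S_M(x0)) = S_N(G(f)(x0)). *)
Lemma natTrans_onto_of_generator (R : comPzRingType) (G F : rfunctor R)
    (S : natTrans G F) (M : fgmod R) (eta : forall N : fgmod R, {linear M -> N} -> fobj F N) :
  hom_nat eta -> (forall (N : fgmod R) (y : fobj F N), exists f, eta N f = y) ->
  forall x0, ntc S M x0 = eta M idfun -> natTrans_onto S.
Proof.
move=> [_ eta_nat] eta_onto x0 S_x0 N y; have [f <-] := eta_onto N y.
exists (fmap G f x0); rewrite ntc_nat S_x0.
by apply/esym/eta_nat.
Qed.

Theorem corollary3p2 (R : comPzRingType) (L : Type) (le : L -> L -> Prop)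
    (Fs : L -> rfunctor R) (phi : forall i j, le i j -> natTrans (Fs i) (Fs j))
    (F : rfunctor R) (T : forall i, natTrans (Fs i) F) :
  noetherian R -> directed le -> direct_system phi -> is_colimit phi T ->
  fg_functor F ->
  exists l0 : L,
    (forall (N : fgmod R) (y : fobj F N), exists x, ntc (T l0) N x = y) /\
    ((forall l (N : fgmod R), injective (ntc (T l) N)) ->
     forall l, le l0 l -> forall N : fgmod R, bijective (ntc (T l) N)).
Proof.
move=> _ le_directed _ T_colimit [M [eta [eta_nat eta_onto]]].
have [l0 [x0 T_x0]] := colimit_cover T_colimit le_directed (eta M idfun).
have T_l0_onto := natTrans_onto_of_generator eta_nat eta_onto T_x0.
exists l0; split => // T_inj l le_l0l N.
apply: inj_surj_bijective (T_inj l N) _.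
apply: (colimit_onto_up T_colimit le_l0l T_l0_onto).
Qed.
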